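(* Let $n\in\mathbb{N}\cup\{0\}$, $A_1,\dots,A_n\in\mathscr{Q}$ and $\mathcal{A}=\{A_1,\dots,A_n\}$. An option set $S\in\mathscr{Q}$ belongs to $\mathrm{Ex}(\mathcal{A})$ if and only if either $S\cap\mathscr{V}_{>0}\neq\emptyset$, or $n\neq0$ and there exists $T\in\mathrm{Posi}'(A_1,\dots,A_n)$ such that for every $t\in T$ there is some $s\in S\cup\{0\}$ with $t\le s$.
   Context: Let $\mathcal{X}$ be a nonempty set and let $\mathscr{V}$ be the real vector space of all functions $u:\mathcal{X}\to\mathbb{R}$ (options), with pointwise operations. For $u,v\in\mathscr{V}$, $u\le v$ iff $u(x)\le v(x)$ for all $x\in\mathcal{X}$, and $u<v$ iff $u\le v$ and $u\neq v$. Let $\mathscr{V}_{>0}=\{u\in\mathscr{V}:0<u\}$ and $\mathscr{V}^s_{>0}=\{\{u\}:u\in\mathscr{V}_{>0}\}$. Let $\mathscr{Q}$ be the set of all finite subsets of $\mathscr{V}$ (including $\emptyset$). For a positive integer $n$, $\mathbb{R}^{n,+}=\{\boldsymbol\lambda\in\mathbb{R}^n:\lambda_j\ge0\ \forall j,\ \sum_j\lambda_j>0\}$, and for $\boldsymbol\lambda\in\mathbb{R}^n$, $\mathbf u=(u_1,\dots,u_n)\in\mathscr{V}^n$, $\boldsymbol\lambda\mathbf u=\sum_{j=1}^n\lambda_ju_j$. A set of desirable option sets is any $K\subseteq\mathscr{Q}$. It is coherent if for all $A,B\in K$: (K0) $A\setminus\{0\}\in K$; (K1) $\{0\}\notin K$;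 (K2) $\mathscr{V}^s_{>0}\subseteq K$; (K3) $\{\boldsymbol\lambda(\mathbf u)\mathbf u:\mathbf u\in A\times B\}\in K$ for every map $\boldsymbol\lambda:A\times B\to\mathbb{R}^{2,+}$; (K4) $A\cup Q\in K$ for all $Q\in\mathscr{Q}$. $\bar{\mathbf K}$ denotes the set of coherent sets of desirable option sets. An assessment is any subset $\mathcal{A}\subseteq\mathscr{Q}$. Let $\bar{\mathbf K}(\mathcal A)=\{K\in\bar{\mathbf K}:\mathcal A\subseteq K\}$ and $\mathrm{Ex}(\mathcal A)=\bigcap\bar{\mathbf K}(\mathcal A)$, with the convention $\bigcap\emptyset=\mathscr{Q}$. For a positive integer $n$ and $A_1,\dots,A_n\in\mathscr{Q}$: $\mathrm{Posi}'(A_1,\dots,A_n)=\{\{\boldsymbol\lambda(\mathbf u)\mathbf u:\mathbf u\in\times_{j=1}^nA_j\}:\ \boldsymbol\lambda:\times_{j=1}^nA_j\to\mathbb{R}^{n,+}\}$. *)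

From Stdlib Require Import Reals List.
Open Scope R_scope.

Section Opts.
Variable X : Type.

Definition opt := X -> R.
Definition oset := opt -> Prop.

Definition zero : opt := fun _ => 0.
Definition ople (u v : opt) : Prop := forall x, u x <= v x.
Definition oplt (u v : opt) : Prop := ople u v /\ u <> v.
Definition posopt (u : opt) : Prop := oplt zero u.

(* membership in Q: finite option sets *)
Definition finite_oset (A : oset) : Prop :=
  exists l : list opt, forall u, A u <-> In u l.

Fixpoint sumR (n : nat) (f : nat -> R) : R :=
  match n with O => 0 | S m => sumR m f + f m end.

(* lambda in R^{n,+} (only the first n coordinates matter) *)
Definition Rnplus (n : nat) (lam : nat -> R) : Prop :=
  (forall j, (j < n)%nat -> 0 <= lam j) /\ 0 < sumR n lam.

Definition coherent (K : oset -> Prop) : Prop :=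
  (forall A, K A -> finite_oset A) /\
  (* K0 *) (forall A, K A -> K (fun u => A u /\ u <> zero)) /\
  (* K1 *) ~ K (fun u => u = zero) /\
  (* K2 *) (forall v, posopt v -> K (fun u => u = v)) /\
  (* K3 *) (forall A B, K A -> K B ->
             forall lam : opt -> opt -> (nat -> R),
               (forall u v, A u -> B v -> Rnplus 2 (lam u v)) ->
               K (fun w => exists u v, A u /\ B v /\
                   w = (fun x => lam u v 0%nat * u x + lam u v 1%nat * v x))) /\
  (* K4 *) (forall A Q, K A -> finite_oset Q -> K (fun u => A u \/ Q u)).

(* Ex(𝒜) = ⋂ {K coherent | 𝒜 ⊆ K}, with ⋂ ∅ = Q *)
Definition Ex (Aset : oset -> Prop) (S : oset) : Prop :=
  finite_oset S /\
  forall K, coherent K -> (forall A, Aset A -> K A) -> K S.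

(* tuples in A_1 × ... × A_n, as lists of length n (0-indexed) *)
Definition in_prod (n : nat) (A : nat -> oset) (u : list opt) : Prop :=
  length u = n /\ forall j, (j < n)%nat -> A j (nth j u zero).

Definition lincomb (n : nat) (lam : nat -> R) (u : list opt) : opt :=
  fun x => sumR n (fun j => lam j * nth j u zero x).

Definition Posi' (n : nat) (A : nat -> oset) (T : oset) : Prop :=
  exists lam : list opt -> (nat -> R),
    (forall u, in_prod n A u -> Rnplus n (lam u)) /\
    forall w, T w <-> exists u, in_prod n A u /\ w = lincomb n (lam u) u.

End Opts.

From Pilot Require Import Defs.
From Stdlib Require Import Reals List Lra Lia Classical ClassicalEpsilon FunctionalExtensionality PropExtensionality.
Open Scope R_scope.

(* Sufficiency.  A positive option in S forces S into every coherent K by (K2) and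
   (K4).  Otherwise we prove two facts about a coherent K containing the A_j, both
   instances of one refinement principle [K_refine] (iterated (K3) replacements of
   the options of a finite R ∈ K): K contains a subset of every element of Posi'
   [K_posi], built one factor A_j at a time; and if every option of some R ∈ K is
   dominated by an option of S ∪ {0}, then S ∈ K [K_dominated].

   Necessity.  Call a finite B "certified" if every tuple u ∈ A_0 × ... × A_{n-1}
   has a certificate: nonnegative weights λ and s ∈ B ∪ {0} with λu ≤ s, where
   Σλ > 0 or s is positive.  The certified sets contain every A_j and, unless {0}
   is certified (a case handled directly), form a coherent set [certified_coherent];
   hence S is certified, and its certificates assemble, by choice, into the
   required T ∈ Posi' [certified_rhs]. *)

Lemma guarded_choice (A B : Type) (P : A -> Prop) (Q : A -> B -> Prop) :
  inhabited B -> (forall a, P a -> exists b, Q a b) ->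
  exists f : A -> B, forall a, P a -> Q a (f a).
Proof.
  intros [b0] H. apply (choice (fun a b => P a -> Q a b)). intros a.
  destruct (classic (P a)) as [Ha|Ha].
  - destruct (H a Ha) as [b Hb]. exists b. auto.
  - exists b0. contradiction.
Qed.

Lemma sumR_ext n f g : (forall j, (j < n)%nat -> f j = g j) -> sumR n f = sumR n g.
Proof.
  induction n as [|n IH]; simpl; intros H; [reflexivity|].
  rewrite IH, H by (intros; try apply H; lia). reflexivity.
Qed.

Lemma sumR_nonneg n f : (forall j, (j < n)%nat -> 0 <= f j) -> 0 <= sumR n f.
Proof.
  induction n as [|n IH]; simpl; intros H; [lra|].
  assert (0 <= f n) by (apply H; lia).
  assert (0 <= sumR n f) by (apply IH; intros; apply H; lia). lra.
Qed.

Lemma sumR_zero n f : (forall j, (j < n)%nat -> f j = 0) -> sumR n f = 0.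
Proof. intros H. rewrite (sumR_ext n f (fun _ => 0)) by exact H. clear H. induction n; simpl; lra. Qed.

Lemma sumR_zero_each n f : (forall j, (j < n)%nat -> 0 <= f j) -> ~ 0 < sumR n f ->
  forall j, (j < n)%nat -> f j = 0.
Proof.
  induction n as [|n IH]; simpl; intros H Hs j Hj; [lia|].
  assert (0 <= f n) by (apply H; lia).
  assert (0 <= sumR n f) by (apply sumR_nonneg; intros; apply H; lia).
  destruct (Nat.eq_dec j n) as [->|Hne]; [lra|].
  apply IH; [intros; apply H; lia|lra|lia].
Qed.

Lemma sumR_scal n c f : sumR n (fun j => c * f j) = c * sumR n f.
Proof. induction n as [|n IH]; simpl; [|rewrite IH]; ring. Qed.

Lemma sumR_add n f g : sumR n (fun j => f j + g j) = sumR n f + sumR n g.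
Proof. induction n as [|n IH]; simpl; [|rewrite IH]; ring. Qed.

Definition indicator (j : nat) : nat -> R := fun k => if Nat.eqb k j then 1 else 0.

Lemma sumR_indicator n j g : (j < n)%nat -> sumR n (fun k => indicator j k * g k) = g j.
Proof.
  induction n as [|n IH]; intros Hj; [lia|]. simpl. unfold indicator at 2.
  destruct (Nat.eq_dec j n) as [->|Hne].
  - rewrite Nat.eqb_refl, sumR_zero; [ring|].
    intros k Hk. unfold indicator. destruct (Nat.eqb_spec k n); [lia|ring].
  - rewrite IH by lia. destruct (Nat.eqb_spec n j); [lia|ring].
Qed.

Lemma Rnplus_ones n : (0 < n)%nat -> Rnplus n (fun _ => 1).
Proof.
  intros Hn. split; [intros; lra|]. destruct n as [|n]; [lia|]. simpl.
  assert (0 <= sumR n (fun _ => 1)) by (apply sumR_nonneg; intros; lra). lra.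
Qed.

Definition pair_weights (a b : R) : nat -> R := fun k => if Nat.eqb k 0 then a else b.

Lemma Rnplus_pair a b : 0 <= a -> 0 <= b -> 0 < a + b -> Rnplus 2 (pair_weights a b).
Proof. intros. unfold pair_weights. split; [intros [|j] _; simpl; assumption|simpl; lra]. Qed.

Lemma Rnplus_2_inv m : Rnplus 2 m -> 0 <= m 0%nat /\ 0 <= m 1%nat /\ 0 < m 0%nat + m 1%nat.
Proof. intros [Hnn Hsum]. simpl in Hsum. repeat split; try (apply Hnn; lia). lra. Qed.

Section Options.
Variable X : Type.

Lemma oset_ext (P Q : oset X) : (forall w, P w <-> Q w) -> P = Q.
Proof. intros H. extensionality w. apply propositional_extensionality, H. Qed.

Lemma posopt_iff (w : opt X) : posopt X w <-> (forall x, 0 <= w x) /\ exists x, 0 < w x.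
Proof.
  split.
  - intros [Hle Hne]. split; [exact Hle|]. apply NNPP. intros Hno. apply Hne.
    extensionality x. specialize (Hle x). unfold zero in *.
    destruct (Rlt_dec 0 (w x)); [exfalso; eauto|lra].
  - intros [Hle [x Hx]]. split; [exact Hle|]. intros E.
    apply (f_equal (fun h => h x)) in E. unfold zero in E. lra.
Qed.

Lemma posopt_zero_false : ~ posopt X (zero X).
Proof. intros [_ H]. apply H. reflexivity. Qed.

Lemma posopt_gap (c s : opt X) : ople X c s -> s <> c -> posopt X (fun x => s x - c x).
Proof.
  intros Hle Hne. split.
  - intros x. unfold zero. specialize (Hle x). lra.
  - intros E. apply Hne. extensionality x.
    apply (f_equal (fun h => h x)) in E. unfold zero in E. lra.
Qed.

Definition dominated (S : oset X) (t : opt X) : Prop :=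
  exists s, (S s \/ s = zero X) /\ ople X t s.

Definition combos (B1 B2 : oset X) (mu : opt X -> opt X -> nat -> R) : oset X :=
  fun w => exists u v, B1 u /\ B2 v /\
    w = (fun x => mu u v 0%nat * u x + mu u v 1%nat * v x).

Definition posi_image n (A : nat -> oset X) (lam : list (opt X) -> nat -> R) : oset X :=
  fun w => exists u, Defs.in_prod X n A u /\ w = lincomb X n (lam u) u.

Lemma finite_of_cover (B : oset X) (l : list (opt X)) :
  (forall u, B u -> In u l) -> finite_oset X B.
Proof.
  revert B. induction l as [|a l IH]; intros B Hl.
  - exists nil. intros u. split; [apply Hl|intros []].
  - destruct (IH (fun u => B u /\ u <> a)) as [l' Hl'].
    { intros u [Hu Hne]. destruct (Hl u Hu) as [->|Hin]; [congruence|exact Hin]. }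
    destruct (classic (B a)) as [Ha|Ha]; [exists (a :: l')|exists l']; intros u; simpl.
    + rewrite <- Hl'. split.
      * intros Hu. destruct (classic (a = u)); [left|right]; auto.
      * intros [<-|[Hu _]]; assumption.
    + rewrite <- Hl'. split.
      * intros Hu. split; [exact Hu|intros ->; contradiction].
      * intros [Hu _]. exact Hu.
Qed.

Lemma finite_union (B Q : oset X) :
  finite_oset X B -> finite_oset X Q -> finite_oset X (fun u => B u \/ Q u).
Proof.
  intros [l1 Hl1] [l2 Hl2]. apply (finite_of_cover _ (l1 ++ l2)).
  intros u [Hu|Hu]; apply in_or_app; [left; apply Hl1|right; apply Hl2]; exact Hu.
Qed.

Lemma finite_combos (B1 B2 : oset X) mu :
  finite_oset X B1 -> finite_oset X B2 -> finite_oset X (combos B1 B2 mu).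
Proof.
  intros [l1 Hl1] [l2 Hl2].
  apply (finite_of_cover _ (map (fun p => fun x => mu (fst p) (snd p) 0%nat * fst p x
                                   + mu (fst p) (snd p) 1%nat * snd p x) (list_prod l1 l2))).
  intros w (u & v & Hu & Hv & ->). apply in_map_iff. exists (u, v).
  split; [reflexivity|]. apply List.in_prod; [apply Hl1|apply Hl2]; assumption.
Qed.

Lemma in_prod_nil (A : nat -> oset X) : Defs.in_prod X 0 A nil.
Proof. split; [reflexivity|intros; lia]. Qed.

Lemma in_prod_snoc {n A u c} : Defs.in_prod X n A u -> A n c ->
  Defs.in_prod X (S n) A (u ++ c :: nil).
Proof.
  intros [Hlen Hu] Hc. split; [rewrite length_app; simpl; lia|].
  intros j Hj. destruct (Nat.eq_dec j n) as [->|Hne].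
  - rewrite app_nth2, <- Hlen, Nat.sub_diag by lia. rewrite Hlen. exact Hc.
  - rewrite app_nth1 by lia. apply Hu. lia.
Qed.

Lemma lincomb_snoc n l (u : list (opt X)) c x : length u = n ->
  lincomb X (S n) l (u ++ c :: nil) x = lincomb X n l u x + l n * c x.
Proof.
  intros Hlen. unfold lincomb. simpl. f_equal.
  - apply sumR_ext. intros j Hj. rewrite app_nth1 by lia. reflexivity.
  - rewrite app_nth2, <- Hlen, Nat.sub_diag by lia. reflexivity.
Qed.

Lemma lincomb_comb n l1 l2 a b (u : list (opt X)) x :
  lincomb X n (fun j => a * l1 j + b * l2 j) u x = a * lincomb X n l1 u x + b * lincomb X n l2 u x.
Proof.
  unfold lincomb. rewrite <- !sumR_scal, <- sumR_add. apply sumR_ext. intros; ring.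
Qed.

Lemma lincomb_null n l (u : list (opt X)) x :
  (forall j, (j < n)%nat -> 0 <= l j) -> ~ 0 < sumR n l -> lincomb X n l u x = 0.
Proof.
  intros Hnn Hsum. apply sumR_zero. intros j Hj.
  rewrite (sumR_zero_each n l Hnn Hsum j Hj). ring.
Qed.

Lemma lincomb_indicator n j (u : list (opt X)) x :
  (j < n)%nat -> lincomb X n (indicator j) u x = nth j u (zero X) x.
Proof. intros Hj. exact (sumR_indicator n j (fun k => nth k u (zero X) x) Hj). Qed.


Section CoherentClosure.
Variable K : oset X -> Prop.
Hypothesis HK : coherent X K.

(* (K2) puts {u} into K and (K4) enlarges it to S. *)
Lemma K_positive_member (S : oset X) u : finite_oset X S -> S u -> posopt X u -> K S.
Proof.
  intros HS Hu Hpos. destruct HK as (_ & _ & _ & HK2 & _ & HK4).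
  replace S with (fun w => w = u \/ S w).
  - exact (HK4 _ S (HK2 u Hpos) HS).
  - apply oset_ext. intros w. split; [intros [->|Hw]|]; auto.
Qed.

(* One use of (K3): in R ∈ K the option c may be replaced by the combinations
   f(d)_0 c + f(d)_1 d, d ∈ D, for any D ∈ K; the other options of R are kept. *)
Lemma K_replace (R D : oset X) c f : K R -> K D -> (forall d, D d -> Rnplus 2 (f d)) ->
  exists R', K R' /\ forall w, R' w ->
    (R w /\ w <> c) \/ exists d, D d /\ w = (fun x => f d 0%nat * c x + f d 1%nat * d x).
Proof.
  intros HR HD Hf. destruct HK as (_ & _ & _ & _ & HK3 & _).
  pose (mu := fun r d => if excluded_middle_informative (r = c) then f d else pair_weights 1 0).
  exists (combos R D mu). split.
  - apply (HK3 R D HR HD mu). intros r d _ Hd. unfold mu.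
    destruct excluded_middle_informative; [auto|apply Rnplus_pair; lra].
  - intros w (r & d & Hr & Hd & ->). unfold mu.
    destruct excluded_middle_informative as [->|Hne]; [right; eauto|left].
    replace (fun x => _) with r; [auto|].
    extensionality x. unfold pair_weights. simpl. ring.
Qed.

(* Iterating [K_replace] over a finite R ∈ K: if each option of R is Good or can be
   replaced by Good combinations with the options of some D ∈ K, then K contains a
   set of Good options. *)
Lemma K_refine (Good R : oset X) : K R -> finite_oset X R ->
  (forall c, R c -> Good c \/ exists D f, K D /\ (forall d, D d -> Rnplus 2 (f d)) /\
     forall d, D d -> Good (fun x => f d 0%nat * c x + f d 1%nat * d x)) ->
  exists R', K R' /\ forall w, R' w -> Good w.
Proof.
  intros HR [l Hl] Href.
  (* invariant: the options of the current set that are not Good are in R and still listed *)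
  assert (Hiter : forall l' R', K R' -> (forall w, R' w -> Good w \/ (In w l' /\ R w)) ->
            exists R'', K R'' /\ forall w, R'' w -> Good w).
  { induction l' as [|c l' IH]; intros R' HR' Hinv.
    - exists R'. split; [exact HR'|]. intros w Hw. destruct (Hinv w Hw) as [Hg|[[] _]]. exact Hg.
    - destruct (classic (R c /\ ~ Good c)) as [[Hc Hbad]|Hok].
      + destruct (Href c Hc) as [Hg|(D & f & HD & Hf & HDgood)]; [contradiction|].
        destruct (K_replace R' D c f HR' HD Hf) as (R'' & HR'' & Hcases).
        apply (IH R'' HR''). intros w Hw.
        destruct (Hcases w Hw) as [[HR'w Hne]|(d & Hd & ->)]; [|left; auto].
        destruct (Hinv w HR'w) as [Hg|[[<-|Hin] HRw]]; [left|congruence|right]; auto.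
      + apply (IH R' HR'). intros w Hw.
        destruct (Hinv w Hw) as [Hg|[[<-|Hin] HRw]]; [left|left|right]; auto.
        apply NNPP. intros Hbad. apply Hok. auto. }
  apply (Hiter l R HR). intros w Hw. right. split; [apply Hl|]; exact Hw.
Qed.

(* If every option of some R ∈ K is dominated by an option of S ∪ {0}, then S ∈ K:
   each option is moved up to its dominating option by adding the positive gap. *)
Lemma K_dominated (S R : oset X) : finite_oset X S -> K R ->
  (forall r, R r -> dominated S r) -> K S.
Proof.
  intros HS HR Hdom. assert (HK' := HK). destruct HK' as (Hfin & HK0 & _ & HK2 & _ & HK4).
  destruct (K_refine (fun w => S w \/ w = zero X) R HR (Hfin R HR)) as (R' & HR' & Hsub).
  { intros c Hc. destruct (Hdom c Hc) as (s & Hs & Hle).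
    destruct (classic (s = c)) as [<-|Hne]; [left; exact Hs|right].
    exists (fun v => v = (fun x => s x - c x)), (fun _ => pair_weights 1 1).
    split; [apply HK2, posopt_gap; assumption|split].
    - intros d _. apply Rnplus_pair; lra.
    - intros d ->. replace (fun x => _) with s; [exact Hs|].
      extensionality x. unfold pair_weights. simpl. ring. }
  replace S with (fun w => (R' w /\ w <> zero X) \/ S w).
  - exact (HK4 _ S (HK0 R' HR') HS).
  - apply oset_ext. intros w. split; [|auto].
    intros [[Hw Hne]|Hw]; [destruct (Hsub w Hw)|]; tauto.
Qed.

(* Induction step for [K_posi]: from sets in K realising Posi'(A_0..A_{n-1}), one
   (K3) combination with c ∈ A_n produces options of Posi'(A_0..A_n). *)
Lemma posi_extend n (A : nat -> oset X) lam c : (0 < n)%nat -> A n c ->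
  (forall u, Defs.in_prod X (S n) A u -> Rnplus (S n) (lam u)) ->
  (forall lam', (forall u, Defs.in_prod X n A u -> Rnplus n (lam' u)) ->
     exists D, K D /\ forall d, D d -> posi_image n A lam' d) ->
  exists D f, K D /\ (forall d, D d -> Rnplus 2 (f d)) /\
    forall d, D d -> posi_image (S n) A lam (fun x => f d 0%nat * c x + f d 1%nat * d x).
Proof.
  intros Hn Hc Hlam IH.
  (* weights on the first n factors: those of λ(u'++[c]), unless they all vanish *)
  pose (lamc := fun u' => if excluded_middle_informative (0 < sumR n (lam (u' ++ c :: nil)))
                          then lam (u' ++ c :: nil) else fun _ => 1).
  destruct (IH lamc) as (D & HD & HDimg).
  { intros u' Hu'. unfold lamc. destruct excluded_middle_informative as [Hpos|_].
    - destruct (Hlam _ (in_prod_snoc Hu' Hc)) as [Hnn _].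
      split; [intros j Hj; apply Hnn; lia|exact Hpos].
    - exact (Rnplus_ones n Hn). }
  destruct (guarded_choice _ _ D _ (inhabits nil) HDimg) as (g & Hg).
  exists D, (fun d => pair_weights (lam (g d ++ c :: nil) n)
    (if excluded_middle_informative (0 < sumR n (lam (g d ++ c :: nil))) then 1 else 0)).
  split; [exact HD|split].
  - intros d Hd. destruct (Hg d Hd) as [Hgd _].
    destruct (Hlam _ (in_prod_snoc Hgd Hc)) as [Hnn Hsum]. simpl in Hsum.
    assert (0 <= lam (g d ++ c :: nil) n) by (apply Hnn; lia).
    destruct excluded_middle_informative; apply Rnplus_pair; lra.
  - intros d Hd. destruct (Hg d Hd) as [Hgd Ed].
    assert (Edx : forall x, d x = lincomb X n (lamc (g d)) (g d) x)
      by (intros x; exact (f_equal (fun h => h x) Ed)).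
    destruct (Hlam _ (in_prod_snoc Hgd Hc)) as [Hnn _].
    exists (g d ++ c :: nil). split; [exact (in_prod_snoc Hgd Hc)|].
    extensionality x. rewrite Edx, lincomb_snoc by apply Hgd.
    unfold lamc, pair_weights. simpl.
    destruct excluded_middle_informative as [Hpos|Hzero]; [ring|].
    rewrite (lincomb_null n (lam (g d ++ c :: nil))); [ring| |exact Hzero]. intros j Hj. apply Hnn. lia.
Qed.

Lemma K_posi m (A : nat -> oset X) lam :
  (forall j, (j < S m)%nat -> K (A j)) ->
  (forall u, Defs.in_prod X (S m) A u -> Rnplus (S m) (lam u)) ->
  exists R, K R /\ forall r, R r -> posi_image (S m) A lam r.
Proof.
  assert (Hfin : forall B, K B -> finite_oset X B) by apply HK.
  revert lam. induction m as [|m IH]; intros lam HAK Hlam.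
  - (* one factor: each c ∈ A_0 is scaled by its weight λ([c])_0 > 0 *)
    apply (K_refine _ (A 0%nat)); [apply HAK; lia|apply Hfin, HAK; lia|].
    intros c Hc. right.
    pose proof (in_prod_snoc (in_prod_nil A) Hc : Defs.in_prod X 1 A (c :: nil)) as Hc1.
    destruct (Hlam _ Hc1) as [_ Hsum]. simpl in Hsum.
    exists (A 0%nat), (fun _ => pair_weights (lam (c :: nil) 0%nat) 0).
    split; [apply HAK; lia|split].
    + intros d _. apply Rnplus_pair; lra.
    + intros d _. exists (c :: nil). split; [exact Hc1|].
      extensionality x. unfold lincomb, pair_weights. simpl. ring.
  - apply (K_refine _ (A (S m))); [apply HAK; lia|apply Hfin, HAK; lia|].
    intros c Hc. right. apply posi_extend; [lia|exact Hc|exact Hlam|].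
    intros lam' Hlam'. apply IH; [intros j Hj; apply HAK; lia|exact Hlam'].
Qed.

End CoherentClosure.

Section Certificates.
Variable n : nat.
Variable A : nat -> oset X.

Definition cert (B : oset X) (u : list (opt X)) : Prop :=
  exists (lam : nat -> R) s, (forall j, (j < n)%nat -> 0 <= lam j) /\
    (B s \/ s = zero X) /\ ople X (lincomb X n lam u) s /\
    (0 < sumR n lam \/ posopt X s).

Definition certified (B : oset X) : Prop :=
  finite_oset X B /\ forall u, Defs.in_prod X n A u -> cert B u.

Lemma cert_mono (B B' : oset X) u :
  (forall s, B s -> B' s \/ s = zero X) -> cert B u -> cert B' u.
Proof.
  intros HBB' (lam & s & Hnn & Hs & Hle & Hpos). exists lam, s.
  repeat split; auto. destruct Hs as [Hs| ->]; auto.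
Qed.

Lemma scaled_positive (a : R) (s : opt X) : 0 <= a -> a = 0 \/ posopt X s ->
  (forall x, 0 <= a * s x) /\ (0 < a -> exists x, 0 < a * s x).
Proof.
  intros Ha [->|Hs].
  - split; [intros; lra|intros; lra].
  - apply posopt_iff in Hs. destruct Hs as [Hnn [x Hx]].
    split; [intros y; specialize (Hnn y); nra|intros; exists x; nra].
Qed.

Lemma cert_positivity_comb l1 l2 (s1 s2 : opt X) a b :
  0 <= a -> 0 <= b -> 0 < a + b ->
  (forall j, (j < n)%nat -> 0 <= l1 j) -> (forall j, (j < n)%nat -> 0 <= l2 j) ->
  (0 < sumR n l1 \/ posopt X s1) -> (0 < sumR n l2 \/ posopt X s2) ->
  0 < sumR n (fun j => a * l1 j + b * l2 j) \/ posopt X (fun x => a * s1 x + b * s2 x).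
Proof.
  intros Ha Hb Hab Hl1 Hl2 Hp1 Hp2. rewrite sumR_add, !sumR_scal.
  assert (0 <= sumR n l1) by (apply sumR_nonneg; exact Hl1).
  assert (0 <= sumR n l2) by (apply sumR_nonneg; exact Hl2).
  destruct (Rlt_dec 0 (a * sumR n l1 + b * sumR n l2)) as [Hpos|Hnpos]; [left; exact Hpos|right].
  assert (Hq1 : a = 0 \/ posopt X s1) by (destruct Hp1; [left; nra|right; assumption]).
  assert (Hq2 : b = 0 \/ posopt X s2) by (destruct Hp2; [left; nra|right; assumption]).
  destruct (scaled_positive a s1 Ha Hq1) as [Hnn1 Hex1].
  destruct (scaled_positive b s2 Hb Hq2) as [Hnn2 Hex2].
  apply posopt_iff. split; [intros x; specialize (Hnn1 x); specialize (Hnn2 x); lra|].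
  destruct (Rlt_dec 0 a) as [Ha'|Ha'].
  - destruct (Hex1 Ha') as [x Hx]. exists x. specialize (Hnn2 x). lra.
  - destruct (Hex2 ltac:(lra)) as [x Hx]. exists x. specialize (Hnn1 x). lra.
Qed.

Lemma cert_combos (B1 B2 : oset X) mu u :
  (forall v1 v2, B1 v1 -> B2 v2 -> Rnplus 2 (mu v1 v2)) ->
  cert B1 u -> cert B2 u -> cert (combos B1 B2 mu) u.
Proof.
  intros Hmu (l1 & s1 & Hl1 & Hs1 & Hle1 & Hp1) (l2 & s2 & Hl2 & Hs2 & Hle2 & Hp2).
  destruct Hs1 as [Hs1| ->]; [destruct Hs2 as [Hs2| ->]|].
  - destruct (Rnplus_2_inv _ (Hmu _ _ Hs1 Hs2)) as (Ha & Hb & Hab).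
    exists (fun j => mu s1 s2 0%nat * l1 j + mu s1 s2 1%nat * l2 j),
      (fun x => mu s1 s2 0%nat * s1 x + mu s1 s2 1%nat * s2 x).
    split; [|split; [|split]].
    + intros j Hj. specialize (Hl1 j Hj). specialize (Hl2 j Hj). nra.
    + left. exists s1, s2. auto.
    + intros x. rewrite lincomb_comb. specialize (Hle1 x). specialize (Hle2 x). nra.
    + apply cert_positivity_comb; assumption.
  - exists l2, (zero X). destruct Hp2 as [Hp2|Hp2]; [|contradiction (posopt_zero_false Hp2)].
    repeat split; auto.
  - exists l1, (zero X). destruct Hp1 as [Hp1|Hp1]; [|contradiction (posopt_zero_false Hp1)].
    repeat split; auto.
Qed.

(* Each A_j is certified, by the weights selecting coordinate j. *)
Lemma certified_assessment j : (j < n)%nat -> finite_oset X (A j) -> certified (A j).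
Proof.
  intros Hj HAj. split; [exact HAj|]. intros u [_ Hu].
  exists (indicator j), (nth j u (zero X)). split; [|split; [|split]].
  - intros k _. unfold indicator. destruct (Nat.eqb k j); lra.
  - left. apply Hu, Hj.
  - intros x. rewrite lincomb_indicator by exact Hj. lra.
  - left. rewrite (sumR_ext n _ (fun k => indicator j k * 1)) by (intros; ring).
    rewrite sumR_indicator by exact Hj. lra.
Qed.

Lemma certified_coherent : ~ certified (fun u => u = zero X) -> coherent X certified.
Proof.
  intros Hzero. split; [|split; [|split; [|split; [|split]]]].
  - intros B [HB _]. exact HB.
  - intros B [[l Hl] Hc]. split.
    + apply (finite_of_cover _ l). intros u [Hu _]. apply Hl, Hu.
    + intros u Hu. apply (cert_mono B); [|auto].
      intros s Hs. destruct (classic (s = zero X)); [right|left; split]; auto.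
  - exact Hzero.
  - intros v Hv. split.
    + exists (v :: nil). intros u. simpl. split; [intros ->; auto|intros [->|[]]; reflexivity].
    + intros u _. exists (fun _ => 0), v. split; [intros; lra|split; [left; reflexivity|split]].
      * intros x. unfold lincomb. rewrite sumR_zero by (intros; ring).
        apply posopt_iff in Hv. apply Hv.
      * right. exact Hv.
  - intros B1 B2 [HB1 Hc1] [HB2 Hc2] mu Hmu. split.
    + exact (finite_combos B1 B2 mu HB1 HB2).
    + intros u Hu. exact (cert_combos B1 B2 mu u Hmu (Hc1 u Hu) (Hc2 u Hu)).
  - intros B Q [HB Hc] HQ. split.
    + exact (finite_union B Q HB HQ).
    + intros u Hu. apply (cert_mono B); auto.
Qed.

Lemma certified_rhs (S : oset X) :
  (forall u, Defs.in_prod X n A u -> cert S u) ->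
  (exists u, S u /\ posopt X u) \/
  (n <> 0%nat /\ exists T, Posi' X n A T /\ forall t, T t -> dominated S t).
Proof.
  intros Hcert. destruct (classic (exists u, S u /\ posopt X u)) as [Hpos|Hnopos];
    [left; exact Hpos|right].
  (* without positive options in S, the weights of every certificate have positive sum *)
  assert (Hweights : forall u, Defs.in_prod X n A u ->
            exists lam, Rnplus n lam /\ dominated S (lincomb X n lam u)).
  { intros u Hu. destruct (Hcert u Hu) as (lam & s & Hnn & Hs & Hle & [Hsum|Hp]).
    - exists lam. split; [split; assumption|exists s; auto].
    - destruct Hs as [Hs| ->]; [exfalso; eauto|contradiction (posopt_zero_false Hp)]. }
  split.
  - intros ->. destruct (Hweights nil (in_prod_nil A)) as (lam & [_ Hsum] & _).
    simpl in Hsum. lra.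
  - destruct (guarded_choice _ _ _ _ (inhabits (fun _ => 0)) Hweights) as (lam & Hlam).
    exists (posi_image n A lam). split.
    + exists lam. split; [intros u Hu; apply Hlam, Hu|intros w; reflexivity].
    + intros t (u & Hu & ->). apply Hlam, Hu.
Qed.

End Certificates.

End Options.

Theorem mainTheorem19 (X : Type) (HX : inhabited X) (n : nat)
  (A : nat -> oset X) (HA : forall j, (j < n)%nat -> finite_oset X (A j))
  (S : oset X) (HS : finite_oset X S) :
  Ex X (fun B => exists j, (j < n)%nat /\ B = A j) S <->
  ((exists u, S u /\ posopt X u) \/
   (n <> 0%nat /\
    exists T, Posi' X n A T /\
      forall t, T t -> exists s, (S s \/ s = zero X) /\ ople X t s)).
Proof.
  split.
  - (* S is certified: either {0} is, or the certified sets are coherent *)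
    intros [_ HEx]. apply (certified_rhs X n A S).
    destruct (classic (certified X n A (fun u => u = zero X))) as [[_ Hzero]|Hzero].
    + intros u Hu. apply (cert_mono X n (fun u => u = zero X)); [intros s ->; right|]; auto.
    + apply (HEx (certified X n A) (certified_coherent X n A Hzero)).
      intros B (j & Hj & ->). exact (certified_assessment X n A j Hj (HA j Hj)).
  - intros Hrhs. split; [exact HS|]. intros K HK HKA.
    destruct Hrhs as [(u & Hu & Hpos)|(Hn & T & (lam & Hlam & HT) & Hdom)].
    + exact (K_positive_member X K HK S u HS Hu Hpos).
    + destruct n as [|m]; [congruence|].
      destruct (K_posi X K HK m A lam (fun j Hj => HKA _ (ex_intro _ j (conj Hj eq_refl))) Hlam)
        as (R & HR & HRT).
      apply (K_dominated X K HK S R HS HR). intros r Hr. apply Hdom, HT, HRT, Hr.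
Qed.
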